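(* A convex $a^2bc$-quadrilateral on the sphere (all angles $<\pi$) satisfies $\alpha+2\beta>\pi$ and $\alpha+2\gamma>\pi$.
   Context: An $a^2bc$-quadrilateral has edges $a,a,b,c$ in cyclic order with $a,b,c$ pairwise distinct; $\alpha$ = angle between the two $a$-edges; $\beta$ = angle between an $a$-edge and the $b$-edge; $\delta$ = angle between the $b$-edge and the $c$-edge; $\gamma$ = angle between the $c$-edge and the other $a$-edge. *)

From Stdlib Require Import Reals.
Open Scope R_scope.

Record vec3 := V3 { vx : R; vy : R; vz : R }.

Definition dot (u v : vec3) : R := vx u * vx v + vy u * vy v + vz u * vz v.

Definition cross (u v : vec3) : vec3 :=
  V3 (vy u * vz v - vz u * vy v)
     (vz u * vx v - vx u * vz v)
     (vx u * vy v - vy u * vx v).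

Definition norm (u : vec3) : R := sqrt (dot u u).

Definition det3 (u v w : vec3) : R := dot (cross u v) w.

Definition on_sphere (u : vec3) : Prop := dot u u = 1.

Definition sdist (u v : vec3) : R := acos (dot u v).

(* the angle at vertex v between the great arcs v->p and v->q:
   the angle between the planes spanned by (v,p) and (v,q), i.e. between
   the tangent directions at v of the two arcs *)
Definition sangle (v p q : vec3) : R :=
  acos (dot (cross v p) (cross v q) / (norm (cross v p) * norm (cross v q))).

(* The spherical quadrilateral V0 V1 V2 V3 (edges = minor great arcs
   V0V1, V1V2, V2V3, V3V0) is convex with all angles < pi:
   for each edge, the two remaining vertices lie strictly on the same
   (left, for the positive orientation) side of the great circle of that edge. *)
Definition convex_quad_pos (V0 V1 V2 V3 : vec3) : Prop :=
  0 < det3 V0 V1 V2 /\ 0 < det3 V0 V1 V3 /\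
  0 < det3 V1 V2 V3 /\ 0 < det3 V1 V2 V0 /\
  0 < det3 V2 V3 V0 /\ 0 < det3 V2 V3 V1 /\
  0 < det3 V3 V0 V1 /\ 0 < det3 V3 V0 V2.

Definition convex_quad (V0 V1 V2 V3 : vec3) : Prop :=
  on_sphere V0 /\ on_sphere V1 /\ on_sphere V2 /\ on_sphere V3 /\
  (convex_quad_pos V0 V1 V2 V3 \/ convex_quad_pos V0 V3 V2 V1).

(* Angles:
   alpha at V0 (between the two a-edges), beta at V1 (a-edge and b-edge),
   delta at V2 (b-edge and c-edge), gamma at V3 (c-edge and other a-edge). *)
Definition a2bc_quad (V0 V1 V2 V3 : vec3) (a b c : R) : Prop :=
  sdist V0 V1 = a /\ sdist V3 V0 = a /\ sdist V1 V2 = b /\ sdist V2 V3 = c /\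
  a <> b /\ b <> c /\ a <> c.

Definition alpha (V0 V1 V2 V3 : vec3) : R := sangle V0 V1 V3.
Definition beta  (V0 V1 V2 V3 : vec3) : R := sangle V1 V0 V2.
Definition delta (V0 V1 V2 V3 : vec3) : R := sangle V2 V1 V3.
Definition gamma (V0 V1 V2 V3 : vec3) : R := sangle V3 V2 V0.

(* Let the isosceles triangle V0 V1 V3 (two sides a) have apex angle alpha and
   base angle theta at V1 and V3.  Its spherical excess gives alpha + 2 theta > pi,
   and by convexity the diagonal V1 V3 runs inside the angle beta at V1 (resp.
   gamma at V3), so beta > theta and gamma > theta. *)
From Stdlib Require Import Reals Lra Psatz.
Open Scope R_scope.

Lemma dotC u v : dot u v = dot v u.
Proof. unfold dot; ring. Qed.

Lemma dot_self_ge0 u : 0 <= dot u u.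
Proof. destruct u; unfold dot; simpl; nra. Qed.

Lemma dot_self_pos u w : dot u w <> 0 -> 0 < dot u u.
Proof.
  destruct u as [x y z], w; unfold dot; simpl; intros Huw.
  destruct (Rle_lt_or_eq_dec 0 (x * x + y * y + z * z)) as [|E]; [nra | assumption |].
  exfalso; apply Huw.
  assert (x = 0) by nra; assert (y = 0) by nra; assert (z = 0) by nra; subst; ring.
Qed.

Lemma det3_cyc u v w : det3 u v w = det3 v w u.
Proof. destruct u, v, w; unfold det3, dot, cross; simpl; ring. Qed.

Lemma det3_swap12 u v w : det3 u v w = - det3 v u w.
Proof. destruct u, v, w; unfold det3, dot, cross; simpl; ring. Qed.

Lemma det3_swap23 u v w : det3 u v w = - det3 u w v.
Proof. destruct u, v, w; unfold det3, dot, cross; simpl; ring. Qed.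

Lemma lagrange_identity u v :
  dot (cross u v) (cross u v) = dot u u * dot v v - dot u v ^ 2.
Proof. destruct u, v; unfold dot, cross; simpl; ring. Qed.

Lemma binet_cauchy u v w t :
  dot (cross u v) (cross w t) = dot u w * dot v t - dot u t * dot v w.
Proof. destruct u, v, w, t; unfold dot, cross; simpl; ring. Qed.

Lemma det3_sq_gram u v w :
  det3 u v w ^ 2 = dot u u * dot v v * dot w w + 2 * dot u v * dot v w * dot w u
                   - dot u u * dot v w ^ 2 - dot v v * dot w u ^ 2 - dot w w * dot u v ^ 2.
Proof. destruct u, v, w; unfold det3, dot, cross; simpl; ring. Qed.

(* [(b x a) x (b x d) = det3 b a d * b] *)
Lemma dot_cross_cross_pivot b a d a' d' :
  dot (cross (cross b a) (cross b d)) (cross (cross b a') (cross b d'))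
  = det3 b a d * det3 b a' d' * dot b b.
Proof. destruct a, b, d, a', d'; unfold det3, dot, cross; simpl; ring. Qed.

Lemma cauchy_schwarz u v : dot u v ^ 2 <= dot u u * dot v v.
Proof. pose proof (lagrange_identity u v); pose proof (dot_self_ge0 (cross u v)); lra. Qed.

Lemma dot_unit_bound u v : dot u u = 1 -> dot v v = 1 -> -1 <= dot u v <= 1.
Proof. intros Hu Hv; pose proof (cauchy_schwarz u v) as H; rewrite Hu, Hv in H; nra. Qed.

Lemma dot_cross_self_pos u v :
  0 < dot (cross u v) (cross u v) -> 0 < dot u u /\ 0 < dot v v.
Proof.
  rewrite lagrange_identity; intros H.
  pose proof (dot_self_ge0 u); pose proof (dot_self_ge0 v).
  split; apply Rnot_le_lt; intros Hle;
    assert (E : dot _ _ = 0) by (apply Rle_antisym; eassumption); rewrite E in H; nra.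
Qed.

Lemma norm_sq u : norm u * norm u = dot u u.
Proof. apply sqrt_sqrt, dot_self_ge0. Qed.

Lemma norm_pos u : 0 < dot u u -> 0 < norm u.
Proof. intros; apply sqrt_lt_R0; assumption. Qed.

(* [sangle v p q = acos (vcos (v x p) (v x q))] *)
Definition vcos (u w : vec3) : R := dot u w / (norm u * norm w).

Lemma vcos_bound u w : -1 <= vcos u w <= 1.
Proof.
  unfold vcos; destruct (Req_dec (dot u w) 0) as [E | E].
  { rewrite E; unfold Rdiv; rewrite Rmult_0_l; lra. }
  pose proof (dot_self_pos u w E) as Hu.
  assert (Hw : 0 < dot w w) by (apply (dot_self_pos w u); rewrite dotC; exact E).
  pose proof (cauchy_schwarz u w); pose proof (norm_sq u); pose proof (norm_sq w).
  pose proof (norm_pos u Hu); pose proof (norm_pos w Hw).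
  assert (Hn : 0 < norm u * norm w) by nra.
  split; apply (Rmult_le_reg_r _ _ _ Hn); unfold Rdiv;
    rewrite Rmult_assoc, Rinv_l by lra; nra.
Qed.

Lemma vcos_sq u w : 0 < dot u u -> 0 < dot w w ->
  vcos u w ^ 2 = dot u w ^ 2 / (dot u u * dot w w).
Proof.
  intros Hu Hw; pose proof (norm_pos u Hu); pose proof (norm_pos w Hw).
  unfold vcos; rewrite <- (norm_sq u), <- (norm_sq w); field; lra.
Qed.

Lemma vcos_of_dot_self_eq u w : dot u u = dot w w -> vcos u w = dot u w / dot u u.
Proof.
  intros E; unfold vcos.
  replace (norm w) with (norm u) by (unfold norm; rewrite E; reflexivity).
  rewrite norm_sq; reflexivity.
Qed.

Lemma sangle_sym v p q : sangle v p q = sangle v q p.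
Proof. unfold sangle; rewrite dotC, Rmult_comm; reflexivity. Qed.

Lemma lt_acos_of_lt_cos c t : -1 <= c <= 1 -> 0 <= t <= PI -> c < cos t -> t < acos c.
Proof.
  intros Hc Ht H; pose proof (acos_bound c).
  apply cos_decreasing_0; try lra; rewrite cos_acos; lra.
Qed.

Lemma acos_lt x y : -1 <= x -> x < y -> y <= 1 -> acos y < acos x.
Proof.
  intros; apply lt_acos_of_lt_cos; [lra | apply acos_bound |].
  rewrite cos_acos; lra.
Qed.

Lemma acos_inj x y : -1 <= x <= 1 -> -1 <= y <= 1 -> acos x = acos y -> x = y.
Proof. intros Hx Hy E; rewrite <- (cos_acos x Hx), <- (cos_acos y Hy), E; reflexivity. Qed.

(* [cos ((PI - acos q) / 2) = sin (acos q / 2)], whose square is [(1 - q) / 2] *)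
Lemma half_supplement_lt_acos p q :
  -1 <= q -> 2 * p ^ 2 < 1 - q -> (PI - acos q) / 2 < acos p.
Proof.
  intros Hq Hpq; pose proof (acos_bound q).
  set (s := sin (acos q / 2)).
  assert (Hs0 : 0 <= s) by (apply sin_ge_0; lra).
  assert (Hs2 : 1 - 2 * s * s = q).
  { unfold s; rewrite <- cos_2a_sin; replace (2 * (acos q / 2)) with (acos q) by field.
    apply cos_acos; nra. }
  apply lt_acos_of_lt_cos; [nra | pose proof PI_RGT_0; lra |].
  replace ((PI - acos q) / 2) with (PI / 2 - acos q / 2) by field.
  rewrite cos_shift; fold s; nra.
Qed.

(* [(P b - Q a) (a b + S) = a (P b^2 - Q S) + b (P S - Q a^2)] and [a b + S > 0] *)
Lemma cos_comparison P Q S a b : 0 < a -> 0 < b ->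
  Q * a ^ 2 < P * S -> Q * S < P * b ^ 2 -> S ^ 2 < a ^ 2 * b ^ 2 -> Q * a < P * b.
Proof.
  intros Ha Hb H1 H2 H3.
  assert (Hab : 0 < a * b) by nra.
  assert (0 < a * b + S).
  { apply Rnot_le_lt; intros Hle.
    assert (a * b <= - S) by lra.
    assert (a * b * (a * b) <= - S * - S) by (apply Rmult_le_compat; lra).
    nra. }
  assert (E : (P * b - Q * a) * (a * b + S)
              = a * (P * b ^ 2 - Q * S) + b * (P * S - Q * a ^ 2)) by ring.
  assert (0 < (P * b - Q * a) * (a * b + S)) by (rewrite E; nra).
  nra.
Qed.

Lemma vcos_lt_of_between u v w :
  0 < dot (cross u v) (cross v w) -> 0 < dot (cross u w) (cross v w) ->
  vcos u w < vcos u v.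
Proof.
  intros Huvw Huwv.
  assert (Hvw : 0 < dot (cross v w) (cross v w))
    by (apply (dot_self_pos _ (cross u v)); rewrite dotC; lra).
  assert (Huv : 0 < dot (cross u v) (cross u v))
    by (apply (dot_self_pos _ (cross v w)); lra).
  destruct (dot_cross_self_pos _ _ Hvw) as [Hv Hw].
  destruct (dot_cross_self_pos _ _ Huv) as [Hu _].
  rewrite binet_cauchy in Huvw, Huwv; rewrite lagrange_identity in Hvw.
  pose proof (norm_pos u Hu); pose proof (norm_pos v Hv); pose proof (norm_pos w Hw).
  assert (Hv2 : norm v ^ 2 = dot v v) by (rewrite <- norm_sq; ring).
  assert (Hw2 : norm w ^ 2 = dot w w) by (rewrite <- norm_sq; ring).
  assert (K : dot u w * norm v < dot u v * norm w).
  { rewrite (dotC w v) in Huwv.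
    apply (cos_comparison _ _ (dot v w)); auto; rewrite ?Hv2, ?Hw2; nra. }
  unfold vcos.
  apply (Rmult_lt_reg_r (norm u * norm v * norm w)); [apply Rmult_lt_0_compat; nra |].
  replace (dot u w / (norm u * norm w) * (norm u * norm v * norm w)) with (dot u w * norm v)
    by (field; lra).
  replace (dot u v / (norm u * norm v) * (norm u * norm v * norm w)) with (dot u v * norm w)
    by (field; lra).
  exact K.
Qed.

(* seen from [B], the direction of [D] lies strictly inside the angle [A B C < PI] *)
Definition inside_angle (B A D C : vec3) : Prop :=
  0 < det3 B A D * det3 B D C /\ 0 < det3 B A C * det3 B D C.

Lemma sangle_lt_of_inside B A D C : inside_angle B A D C -> sangle B A D < sangle B A C.
Proof.
  intros [HD HC].
  assert (HB : 0 < dot B B).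
  { apply (dot_self_pos B (cross D C)); rewrite dotC.
    change (det3 D C B <> 0); rewrite <- det3_cyc; intros E; rewrite E in HD; lra. }
  apply acos_lt; try apply vcos_bound.
  apply vcos_lt_of_between; rewrite dot_cross_cross_pivot; nra.
Qed.

Lemma isosceles_vcos_ineq A B D :
  on_sphere A -> on_sphere B -> on_sphere D -> dot A B = dot A D -> det3 A B D <> 0 ->
  2 * vcos (cross B A) (cross B D) ^ 2 < 1 - vcos (cross A B) (cross A D).
Proof.
  unfold on_sphere; intros HA HB HD Hx Hdet.
  set (x := dot A B) in *; set (y := dot B D).
  (* everything reduces to [1 + y - 2 x^2 > 0], i.e. to the positivity of this Gram determinant *)
  assert (Hgram : det3 A B D ^ 2 = (1 - y) * (1 + y - 2 * x ^ 2)).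
  { rewrite det3_sq_gram, HA, HB, HD, (dotC D A), <- Hx; fold x y; ring. }
  assert (Hy : -1 <= y <= 1) by (apply dot_unit_bound; assumption).
  assert (Hdet2 : 0 < det3 A B D ^ 2) by (pose proof (Rsqr_pos_lt _ Hdet); unfold Rsqr in *; nra).
  rewrite Hgram in Hdet2.
  assert (Hy1 : 0 < 1 - y) by nra.
  assert (Hxy : 0 < 1 + y - 2 * x ^ 2) by nra.
  assert (Hx2 : 0 < 1 - x ^ 2) by nra.
  assert (Hy2 : 0 < 1 - y ^ 2) by nra.
  assert (Nab : dot (cross A B) (cross A B) = 1 - x ^ 2)
    by (rewrite lagrange_identity, HA, HB; fold x; ring).
  assert (Nad : dot (cross A D) (cross A D) = 1 - x ^ 2)
    by (rewrite lagrange_identity, HA, HD, <- Hx; fold x; ring).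
  assert (Nba : dot (cross B A) (cross B A) = 1 - x ^ 2)
    by (rewrite lagrange_identity, HA, HB, dotC; fold x; ring).
  assert (Nbd : dot (cross B D) (cross B D) = 1 - y ^ 2)
    by (rewrite lagrange_identity, HB, HD; fold y; ring).
  assert (Hapex : vcos (cross A B) (cross A D) = (y - x ^ 2) / (1 - x ^ 2)).
  { rewrite vcos_of_dot_self_eq by (rewrite Nab, Nad; reflexivity).
    rewrite binet_cauchy, HA, Nab, <- Hx, (dotC B A); fold x y; f_equal; ring. }
  assert (Hbase : vcos (cross B A) (cross B D) ^ 2 = (x - y * x) ^ 2 / ((1 - x ^ 2) * (1 - y ^ 2))).
  { rewrite vcos_sq, binet_cauchy, HB, Nba, Nbd, <- Hx by lra; fold x y; f_equal; ring. }
  assert (E : 1 - vcos (cross A B) (cross A D) - 2 * vcos (cross B A) (cross B D) ^ 2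
              = (1 - y) ^ 2 * (1 + y - 2 * x ^ 2) / ((1 - x ^ 2) * (1 - y ^ 2)))
    by (rewrite Hapex, Hbase; field; split; lra).
  assert (0 < (1 - y) ^ 2 * (1 + y - 2 * x ^ 2) / ((1 - x ^ 2) * (1 - y ^ 2)))
    by (apply Rdiv_lt_0_compat; nra).
  lra.
Qed.

Lemma isosceles_apex_add_twice_base_gt_PI A B D :
  on_sphere A -> on_sphere B -> on_sphere D -> dot A B = dot A D -> det3 A B D <> 0 ->
  PI < sangle A B D + 2 * sangle B A D.
Proof.
  intros HA HB HD Hx Hdet.
  pose proof (half_supplement_lt_acos _ _ (proj1 (vcos_bound _ _))
                (isosceles_vcos_ineq A B D HA HB HD Hx Hdet)).
  unfold sangle; fold (vcos (cross A B) (cross A D)) (vcos (cross B A) (cross B D)); lra.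
Qed.

Lemma apex_add_twice_outer_gt_PI A B C D :
  on_sphere A -> on_sphere B -> on_sphere D -> dot A B = dot A D -> inside_angle B A D C ->
  PI < sangle A B D + 2 * sangle B A C.
Proof.
  intros HA HB HD Hx Hin; pose proof Hin as [HinD _].
  assert (Hdet : det3 A B D <> 0).
  { rewrite det3_swap12; intros E; rewrite <- (Ropp_involutive (det3 B A D)), E in HinD; lra. }
  pose proof (isosceles_apex_add_twice_base_gt_PI A B D HA HB HD Hx Hdet).
  pose proof (sangle_lt_of_inside B A D C Hin).
  lra.
Qed.

Lemma convex_quad_pos_diagonal_inside V0 V1 V2 V3 :
  convex_quad_pos V0 V1 V2 V3 ->
  inside_angle V1 V0 V3 V2 /\ inside_angle V3 V0 V1 V2.
Proof.
  intros (H012 & H013 & H123 & _ & _ & _ & H301 & H302); unfold inside_angle.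
  rewrite (det3_swap12 V1 V0 V3), (det3_swap23 V1 V3 V2), (det3_swap12 V1 V0 V2),
    (det3_cyc V3 V1 V2).
  repeat split; nra.
Qed.

Theorem lemma5 (V0 V1 V2 V3 : vec3) (a b c : R) :
  convex_quad V0 V1 V2 V3 ->
  a2bc_quad V0 V1 V2 V3 a b c ->
  alpha V0 V1 V2 V3 + 2 * beta V0 V1 V2 V3 > PI /\
  alpha V0 V1 V2 V3 + 2 * gamma V0 V1 V2 V3 > PI.
Proof.
  intros (H0 & H1 & H2 & H3 & Hconv) (Ha & Ha' & _).
  assert (Hx : dot V0 V1 = dot V0 V3).
  { rewrite (dotC V0 V3); unfold sdist in Ha, Ha'.
    apply acos_inj; try apply dot_unit_bound; auto; congruence. }
  assert (Hin : inside_angle V1 V0 V3 V2 /\ inside_angle V3 V0 V1 V2).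
  { destruct Hconv as [Hpos | Hpos]; apply convex_quad_pos_diagonal_inside in Hpos; tauto. }
  destruct Hin as [Hin1 Hin3].
  unfold alpha, beta, gamma; split.
  - apply apex_add_twice_outer_gt_PI; auto.
  - rewrite (sangle_sym V0 V1 V3), (sangle_sym V3 V2 V0).
    apply apex_add_twice_outer_gt_PI; auto.
Qed.
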